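(* The set $\{f\in\mathcal X_M': f(0)\le1\}$ is compact in $(\mathcal X_M',\tau_{AW})$.
   Context: For $f:\mathbb R\to[-\infty,\infty]$, $\mathrm{epi}(f)=\{(\theta,b)\in\mathbb R^2:b\ge f(\theta)\}$. On $\mathbb R^2$ use the box metric $d(x,y)=\max(|x_1-y_1|,|x_2-y_2|)$, $d(x,A)=\inf_{y\in A}d(x,y)$, $\overline B_k=\{x:d(0,x)\le k\}$. $\mathcal X_M'$ is the set of lower semicontinuous convex $f:\mathbb R\to[0,\infty]$ with $f(0)<\infty$, equipped with the Attouch–Wets topology $\tau_{AW}$ (identifying functions with their epigraphs), whose local base at $f$ is $V_k(f)=\{g:\sup_{x\in\overline B_k}|d(x,\mathrm{epi}(g))-d(x,\mathrm{epi}(f))|<1/k\}$, $k\in\mathbb N$. *)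

From Stdlib Require Import Reals Lra List Classical ClassicalEpsilon.
Open Scope R_scope.

(* Values of functions in X_M' lie in [0,+oo]; we use reals extended by +oo. *)
Inductive ERbar : Type := Fin (r : R) | PInf.

Definition epi (f : R -> ERbar) (p : R * R) : Prop :=
  match f (fst p) with Fin v => v <= snd p | PInf => False end.

Definition boxd (x y : R * R) : R :=
  Rmax (Rabs (fst x - fst y)) (Rabs (snd x - snd y)).

Definition is_glb (S : R -> Prop) (m : R) : Prop :=
  (forall r, S r -> m <= r) /\ (forall m', (forall r, S r -> m' <= r) -> m' <= m).

(* d(x,A) = inf_{y in A} d(x,y) (well defined whenever A is nonempty). *)
Definition dset (x : R * R) (A : R * R -> Prop) : R :=
  epsilon (inhabits 0) (fun m => is_glb (fun r => exists y, A y /\ r = boxd x y) m).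

Definition ball (k : nat) (x : R * R) : Prop := boxd (0, 0) x <= INR k.

Definition AWdev (k : nat) (f g : R -> ERbar) : R :=
  epsilon (inhabits 0)
    (fun s => is_lub (fun r => exists x, ball k x /\
                         r = Rabs (dset x (epi g) - dset x (epi f))) s).

Definition Vk (k : nat) (f g : R -> ERbar) : Prop := AWdev k f g < 1 / INR k.

Definition ERlt (a : R) (e : ERbar) : Prop :=
  match e with Fin v => a < v | PInf => True end.

Definition nonneg_valued (f : R -> ERbar) : Prop :=
  forall t v, f t = Fin v -> 0 <= v.

Definition convex_fun (f : R -> ERbar) : Prop :=
  forall p q (l : R), epi f p -> epi f q -> 0 <= l <= 1 ->
    epi f (l * fst p + (1 - l) * fst q, l * snd p + (1 - l) * snd q).

Definition lsc (f : R -> ERbar) : Prop :=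
  forall t a, ERlt a (f t) ->
    exists delta, 0 < delta /\ forall s, Rabs (s - t) < delta -> ERlt a (f s).

Definition XM (f : R -> ERbar) : Prop :=
  lsc f /\ convex_fun f /\ nonneg_valued f /\ f 0 <> PInf.

Definition AWopen (U : (R -> ERbar) -> Prop) : Prop :=
  forall f, XM f -> U f ->
    exists k : nat, (1 <= k)%nat /\ forall g, XM g -> Vk k f g -> U g.

Definition AWcompact (K : (R -> ERbar) -> Prop) : Prop :=
  (forall f, K f -> XM f) /\
  forall (I : Type) (U : I -> (R -> ERbar) -> Prop),
    (forall i, AWopen (U i)) ->
    (forall f, K f -> exists i, U i f) ->
    exists l : list I, forall f, K f -> exists i, In i l /\ U i f.

Definition Kset (f : R -> ERbar) : Prop :=
  XM f /\ exists v, f 0 = Fin v /\ v <= 1.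

(* Identify f with the distance function d_f = d(., epi f); then V_k(f) is a ball for
   the pseudometric sup_{B_k} |d_g - d_f|, and compactness follows from total
   boundedness and completeness by the nested-cover argument: a cover without finite
   subcover yields nested uncovered pieces of shrinking diameter, and the limit of a
   sequence picked in them lies in a cover member that already contains a whole piece.
   Total boundedness: on K every d_f is 1-Lipschitz and bounded by d(., (0,1)), so its
   quantized values on a finite grid of B_k determine it up to a small error.
   Completeness: the distance functions of a Cauchy sequence converge locally uniformly
   to a 1-Lipschitz phi >= 0 that is convex, nonincreasing in the height, at least -b at
   (t,b) and zero at (0,1). Its zero set is the epigraph of some f in K, and since
   near-zeros of phi can be pushed to exact zeros (completeness of the plane), phi = d_f. *)

From Stdlib Require Import Reals Lra Lia List Classical ClassicalEpsilon ZArith.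
Open Scope R_scope.

Lemma Rabs_le_bounds a b : Rabs a <= b -> - b <= a <= b.
Proof.
  intros H. pose proof (Rle_abs a). pose proof (Rle_abs (- a)).
  rewrite Rabs_Ropp in *. lra.
Qed.

Lemma cv_dist_le (u : nat -> R) l a c N :
  Un_cv u l -> (forall n, (N <= n)%nat -> Rabs (a - u n) <= c) -> Rabs (a - l) <= c.
Proof.
  intros Hu H. apply le_epsilon. intros d Hd.
  destruct (Hu d Hd) as [M HM]. specialize (HM (max N M) ltac:(lia)).
  specialize (H (max N M) ltac:(lia)). unfold Rdist in HM.
  replace (a - l) with ((a - u (max N M)) + (u (max N M) - l)) by ring.
  eapply Rle_trans; [apply Rabs_triang|]. lra.
Qed.

Lemma cv_const c : Un_cv (fun _ => c) c.
Proof. intros e He. exists O. intros n _. unfold Rdist. rewrite Rminus_diag, Rabs_R0. lra. Qed.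

Lemma boxd_fst x y : Rabs (fst x - fst y) <= boxd x y.
Proof. apply Rmax_l. Qed.

Lemma boxd_snd x y : Rabs (snd x - snd y) <= boxd x y.
Proof. apply Rmax_r. Qed.

Lemma boxd_lub x y c :
  Rabs (fst x - fst y) <= c -> Rabs (snd x - snd y) <= c -> boxd x y <= c.
Proof. apply Rmax_lub. Qed.

Lemma boxd_ge0 x y : 0 <= boxd x y.
Proof. eapply Rle_trans; [apply Rabs_pos | apply boxd_fst]. Qed.

Lemma boxd_sym x y : boxd x y = boxd y x.
Proof. unfold boxd. now rewrite (Rabs_minus_sym (fst x)), (Rabs_minus_sym (snd x)). Qed.

Lemma boxd_refl x : boxd x x = 0.
Proof. unfold boxd. rewrite !Rminus_diag, Rabs_R0. apply Rmax_left; lra. Qed.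

Lemma boxd_triangle x y z : boxd x z <= boxd x y + boxd y z.
Proof.
  apply boxd_lub.
  - replace (fst x - fst z) with ((fst x - fst y) + (fst y - fst z)) by ring.
    eapply Rle_trans; [apply Rabs_triang|].
    pose proof (boxd_fst x y); pose proof (boxd_fst y z); lra.
  - replace (snd x - snd z) with ((snd x - snd y) + (snd y - snd z)) by ring.
    eapply Rle_trans; [apply Rabs_triang|].
    pose proof (boxd_snd x y); pose proof (boxd_snd y z); lra.
Qed.

Definition comb (l : R) (p q : R * R) : R * R :=
  (l * fst p + (1 - l) * fst q, l * snd p + (1 - l) * snd q).

Lemma Rabs_comb_le l a b :
  0 <= l <= 1 -> Rabs (l * a + (1 - l) * b) <= l * Rabs a + (1 - l) * Rabs b.
Proof.
  intros H. eapply Rle_trans; [apply Rabs_triang|].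
  rewrite !Rabs_mult, (Rabs_right l), (Rabs_right (1 - l)); lra.
Qed.

Lemma boxd_comb l p q x y :
  0 <= l <= 1 -> boxd (comb l p q) (comb l x y) <= l * boxd p x + (1 - l) * boxd q y.
Proof.
  intros H. apply boxd_lub; simpl.
  - replace (l * fst p + (1 - l) * fst q - (l * fst x + (1 - l) * fst y)) with
      (l * (fst p - fst x) + (1 - l) * (fst q - fst y)) by ring.
    eapply Rle_trans; [apply Rabs_comb_le; auto|].
    pose proof (boxd_fst p x); pose proof (boxd_fst q y).
    apply Rplus_le_compat; apply Rmult_le_compat_l; lra.
  - replace (l * snd p + (1 - l) * snd q - (l * snd x + (1 - l) * snd y)) with
      (l * (snd p - snd x) + (1 - l) * (snd q - snd y)) by ring.
    eapply Rle_trans; [apply Rabs_comb_le; auto|].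
    pose proof (boxd_snd p x); pose proof (boxd_snd q y).
    apply Rplus_le_compat; apply Rmult_le_compat_l; lra.
Qed.

Lemma ball_mono k m x : (k <= m)%nat -> ball k x -> ball m x.
Proof. unfold ball. intros H%le_INR Hx. lra. Qed.

Lemma ball_eventually x : exists N, forall m, (N <= m)%nat -> ball m x.
Proof.
  destruct (INR_unbounded (boxd (0, 0) x)) as [N HN]. exists N. intros m Hm.
  apply (ball_mono N); auto. unfold ball. lra.
Qed.

Lemma glb_exists (S : R -> Prop) m0 :
  (exists r, S r) -> (forall r, S r -> m0 <= r) -> exists m, is_glb S m.
Proof.
  intros [r0 Hr0] Hlb.
  destruct (completeness (fun r => S (- r))) as [m [Hm1 Hm2]].
  - exists (- m0). intros x Hx%Hlb. lra.
  - exists (- r0). now rewrite Ropp_involutive.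
  - exists (- m). split.
    + intros r Hr. assert (- r <= m) by (apply Hm1; now rewrite Ropp_involutive). lra.
    + intros m' Hm'. assert (m <= - m') by (apply Hm2; intros x Hx%Hm'; lra). lra.
Qed.

Lemma glb_approx S m e : is_glb S m -> 0 < e -> exists r, S r /\ r < m + e.
Proof.
  intros [_ Hglb] He. apply NNPP. intros Hn.
  assert (m + e <= m); [|lra].
  apply Hglb. intros r Hr. apply Rnot_lt_le. intros Hlt. apply Hn. eauto.
Qed.

Definition nonempty (A : R * R -> Prop) : Prop := exists y, A y.

Section DistanceToSet.

Variable A : R * R -> Prop.
Hypothesis A_ne : nonempty A.

Lemma dset_spec x : is_glb (fun r => exists y, A y /\ r = boxd x y) (dset x A).
Proof.
  destruct A_ne as [y Hy]. unfold dset. apply epsilon_spec, (glb_exists _ 0).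
  - exists (boxd x y); eauto.
  - intros r [z [_ ->]]. apply boxd_ge0.
Qed.

Lemma dset_le x y : A y -> dset x A <= boxd x y.
Proof. intros Hy. apply (proj1 (dset_spec x)). eauto. Qed.

Lemma dset_glb x m : (forall y, A y -> m <= boxd x y) -> m <= dset x A.
Proof. intros H. apply (proj2 (dset_spec x)). intros r [y [Hy ->]]. auto. Qed.

Lemma dset_ge0 x : 0 <= dset x A.
Proof. apply dset_glb. intros. apply boxd_ge0. Qed.

Lemma dset_zero y : A y -> dset y A = 0.
Proof.
  intros Hy. pose proof (dset_le y y Hy). pose proof (dset_ge0 y).
  rewrite boxd_refl in *. lra.
Qed.

Lemma dset_approx x e : 0 < e -> exists y, A y /\ boxd x y < dset x A + e.
Proof.
  intros He. destruct (glb_approx _ _ _ (dset_spec x) He) as [r [[y [Hy ->]] Hr]]. eauto.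
Qed.

Lemma dset_lip x z : dset x A <= boxd x z + dset z A.
Proof.
  apply le_epsilon. intros e He.
  destruct (dset_approx z e He) as [y [Hy Hl]].
  pose proof (dset_le x y Hy). pose proof (boxd_triangle x z y). lra.
Qed.

Lemma dset_lip_abs x z : Rabs (dset x A - dset z A) <= boxd x z.
Proof.
  pose proof (dset_lip x z). pose proof (dset_lip z x). rewrite (boxd_sym z x) in *.
  apply Rabs_le; lra.
Qed.

End DistanceToSet.

Lemma XM_epi_nonempty f : XM f -> nonempty (epi f).
Proof.
  intros (_ & _ & _ & H0). destruct (f 0) as [v|] eqn:E; [|congruence].
  exists (0, v). unfold epi; simpl. rewrite E. lra.
Qed.

Section EpigraphDistance.

Variable f : R -> ERbar.
Hypothesis epi_ne : nonempty (epi f).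

Lemma dset_epi_mono t b b' : b <= b' -> dset (t, b') (epi f) <= dset (t, b) (epi f).
Proof.
  intros Hb. apply le_epsilon. intros e He.
  destruct (dset_approx _ epi_ne (t, b) e He) as [[s c] [Hy Hl]].
  assert (Hy' : epi f (s, c + (b' - b))).
  { unfold epi in *; simpl in *. destruct (f s); auto. lra. }
  pose proof (dset_le _ epi_ne (t, b') _ Hy').
  replace (boxd (t, b') (s, c + (b' - b))) with (boxd (t, b) (s, c)) in *
    by (unfold boxd; simpl; do 2 f_equal; ring).
  lra.
Qed.

Lemma dset_epi_ge_opp t b : nonneg_valued f -> - b <= dset (t, b) (epi f).
Proof.
  intros Hnn. apply (dset_glb _ epi_ne). intros [s c] Hy.
  unfold epi in Hy; simpl in Hy. destruct (f s) as [v|] eqn:E; [|contradiction].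
  apply Hnn in E. pose proof (boxd_snd (t, b) (s, c)) as Hs. simpl in *.
  rewrite Rabs_minus_sym in Hs. pose proof (Rle_abs (c - b)). lra.
Qed.

Lemma dset_epi_convex p q l : convex_fun f -> 0 <= l <= 1 ->
  dset (comb l p q) (epi f) <= l * dset p (epi f) + (1 - l) * dset q (epi f).
Proof.
  intros Hcvx Hl. apply le_epsilon. intros e He.
  destruct (dset_approx _ epi_ne p e He) as [y1 [Hy1 L1]].
  destruct (dset_approx _ epi_ne q e He) as [y2 [Hy2 L2]].
  pose proof (dset_le _ epi_ne (comb l p q) (comb l y1 y2) (Hcvx y1 y2 l Hy1 Hy2 Hl)).
  pose proof (boxd_comb l p q y1 y2 Hl).
  assert (l * boxd p y1 <= l * (dset p (epi f) + e)) by (apply Rmult_le_compat_l; lra).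
  assert ((1 - l) * boxd q y2 <= (1 - l) * (dset q (epi f) + e))
    by (apply Rmult_le_compat_l; lra).
  lra.
Qed.

End EpigraphDistance.

Lemma Kset_epi_01 f : Kset f -> epi f (0, 1).
Proof. intros [_ [v [E Hv]]]. unfold epi; simpl. now rewrite E. Qed.

Lemma Kset_epi_nonempty f : Kset f -> nonempty (epi f).
Proof. intros Hf. exists (0, 1). now apply Kset_epi_01. Qed.

Lemma XM_dset_bounded_on_ball f k :
  XM f -> exists C, forall x, ball k x -> dset x (epi f) <= C.
Proof.
  intros Hf. pose proof (XM_epi_nonempty f Hf) as Hne.
  destruct Hf as (_ & _ & _ & H0). destruct (f 0) as [v|] eqn:E; [|congruence].
  assert (Hv : epi f (0, v)) by (unfold epi; simpl; rewrite E; lra).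
  exists (INR k + boxd (0, 0) (0, v)). intros x Hx. unfold ball in Hx.
  pose proof (dset_le _ Hne x _ Hv). pose proof (boxd_triangle x (0, 0) (0, v)).
  rewrite boxd_sym in Hx. lra.
Qed.

Section Deviation.

Variables (k : nat) (f g : R -> ERbar).
Hypotheses (Hf : XM f) (Hg : XM g).

Lemma AWdev_spec :
  is_lub (fun r => exists x, ball k x /\ r = Rabs (dset x (epi g) - dset x (epi f)))
    (AWdev k f g).
Proof.
  unfold AWdev. apply epsilon_spec.
  destruct (completeness (fun r => exists x, ball k x /\ r = Rabs (dset x (epi g) - dset x (epi f))))
    as [m Hm]; [| |now exists m].
  - destruct (XM_dset_bounded_on_ball f k Hf) as [Cf HCf].
    destruct (XM_dset_bounded_on_ball g k Hg) as [Cg HCg].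
    exists (Cf + Cg). intros r [x [Hx ->]].
    pose proof (dset_ge0 _ (XM_epi_nonempty f Hf) x).
    pose proof (dset_ge0 _ (XM_epi_nonempty g Hg) x).
    specialize (HCf x Hx). specialize (HCg x Hx). apply Rabs_le; lra.
  - exists (Rabs (dset (0, 0) (epi g) - dset (0, 0) (epi f))), (0, 0). split; auto.
    unfold ball. rewrite boxd_refl. apply pos_INR.
Qed.

Lemma AWdev_ge x : ball k x -> Rabs (dset x (epi g) - dset x (epi f)) <= AWdev k f g.
Proof. intros Hx. apply (proj1 AWdev_spec). eauto. Qed.

Lemma AWdev_le e :
  (forall x, ball k x -> Rabs (dset x (epi g) - dset x (epi f)) <= e) -> AWdev k f g <= e.
Proof. intros H. apply (proj2 AWdev_spec). intros r [x [Hx ->]]. auto. Qed.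

End Deviation.

Lemma AWdev_sym k f g : XM f -> XM g -> AWdev k f g = AWdev k g f.
Proof.
  intros Hf Hg.
  apply Rle_antisym; apply AWdev_le; auto; intros x Hx;
    rewrite Rabs_minus_sym; apply AWdev_ge; auto.
Qed.

Lemma AWdev_triangle k f g h :
  XM f -> XM g -> XM h -> AWdev k f h <= AWdev k f g + AWdev k g h.
Proof.
  intros Hf Hg Hh. apply AWdev_le; auto. intros x Hx.
  replace (dset x (epi h) - dset x (epi f)) with
    ((dset x (epi g) - dset x (epi f)) + (dset x (epi h) - dset x (epi g))) by ring.
  eapply Rle_trans; [apply Rabs_triang|].
  apply Rplus_le_compat; apply AWdev_ge; auto.
Qed.

Lemma AWdev_mono k m f g : XM f -> XM g -> (k <= m)%nat -> AWdev k f g <= AWdev m f g.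
Proof.
  intros Hf Hg Hkm. apply AWdev_le; auto. intros x Hx.
  apply AWdev_ge; auto. eapply ball_mono; eauto.
Qed.

(** * Total boundedness *)

Lemma Kset_dset_le f x : Kset f -> dset x (epi f) <= boxd x (0, 1).
Proof. intros Hf. apply (dset_le _ (Kset_epi_nonempty f Hf)), Kset_epi_01, Hf. Qed.

Lemma ball_boxd_01 k x : ball k x -> boxd x (0, 1) <= INR k + 1.
Proof.
  unfold ball. intros Hx. pose proof (boxd_triangle x (0, 0) (0, 1)).
  assert (boxd (0, 0) (0, 1) = 1).
  { unfold boxd; simpl. rewrite Rminus_diag, Rabs_R0, Rabs_left, Rmax_right; lra. }
  rewrite boxd_sym in Hx. lra.
Qed.

Lemma finite_representatives {A : Type} (P : A -> Prop) (F : A -> list nat)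
    (codes : list (list nat)) :
  exists L, (forall c, In c L -> P c) /\
    forall a, P a -> In (F a) codes -> exists c, In c L /\ F c = F a.
Proof.
  induction codes as [|w ws [L [HL1 HL2]]].
  - exists nil. split; [intros c []|]. intros a _ [].
  - destruct (classic (exists a, P a /\ F a = w)) as [[a0 [Pa0 Fa0]]|Hn].
    + exists (a0 :: L). split.
      * intros c [<-|Hc]; auto.
      * intros a Pa [Ha|Ha].
        -- exists a0. split; [left; auto | congruence].
        -- destruct (HL2 a Pa Ha) as [c [? ?]]. exists c. split; auto. now right.
    + exists L. split; auto. intros a Pa [Ha|Ha]; auto.
      exfalso. apply Hn. eauto.
Qed.

Fixpoint bounded_codes (n N : nat) : list (list nat) :=
  match n with
  | O => nil :: nil
  | S n' => flat_map (fun j => map (cons j) (bounded_codes n' N)) (seq 0 (S N))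
  end.

Lemma in_bounded_codes n N l :
  length l = n -> (forall j, In j l -> (j <= N)%nat) -> In l (bounded_codes n N).
Proof.
  revert l. induction n as [|n IH]; intros [|j l] Hl Hj; simpl in Hl; try lia.
  - now left.
  - apply in_flat_map. exists j. split.
    + apply in_seq. assert (j <= N)%nat by (apply Hj; now left). lia.
    + apply in_map, IH; [lia|]. intros j' H'. apply Hj. now right.
Qed.

Lemma nat_near n s : 0 <= s <= INR n -> exists i, (i <= n)%nat /\ Rabs (s - INR i) <= 1.
Proof.
  induction n as [|n IH]; intros Hs.
  - exists O. split; auto. simpl in *. rewrite Rminus_0_r, Rabs_right; lra.
  - destruct (Rle_dec s (INR n)) as [H|H].
    + destruct (IH (conj (proj1 Hs) H)) as [i [Hi Ha]]. exists i. split; auto.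
    + exists (S n). split; auto. rewrite S_INR in *. apply Rabs_le; lra.
Qed.

Definition mesh (m p : nat) : list R :=
  map (fun i => - INR m + INR i / INR p) (seq 0 (S (2 * m * p))).

Lemma mesh_approx m p t : (0 < p)%nat -> Rabs t <= INR m ->
  exists a, In a (mesh m p) /\ Rabs (t - a) <= / INR p.
Proof.
  intros Hp Ht. assert (HP : 0 < INR p) by (apply lt_0_INR; lia).
  apply Rabs_le_bounds in Ht.
  destruct (nat_near (2 * m * p) ((t + INR m) * INR p)) as [i [Hi Ha]].
  - rewrite !mult_INR. simpl. split; [apply Rmult_le_pos; lra|].
    apply Rmult_le_compat_r; lra.
  - exists (- INR m + INR i / INR p). split.
    + apply (in_map (fun i => - INR m + INR i / INR p)), in_seq. lia.
    + replace (t - (- INR m + INR i / INR p)) with (((t + INR m) * INR p - INR i) * / INR p)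
        by (field; lra).
      rewrite Rabs_mult, (Rabs_right (/ INR p)) by (apply Rle_ge, Rlt_le, Rinv_0_lt_compat; lra).
      rewrite <- (Rmult_1_l (/ INR p)) at 2.
      apply Rmult_le_compat_r; [apply Rlt_le, Rinv_0_lt_compat; lra | auto].
Qed.

Lemma mesh_bound m p a : (0 < p)%nat -> In a (mesh m p) -> Rabs a <= INR m.
Proof.
  intros Hp Ha. assert (HP : 0 < INR p) by (apply lt_0_INR; lia).
  apply in_map_iff in Ha. destruct Ha as [i [<- Hi]].
  apply in_seq in Hi. assert (Hi' : (i <= 2 * m * p)%nat) by lia.
  apply le_INR in Hi'. rewrite !mult_INR in Hi'. simpl in Hi'.
  assert (0 <= INR i / INR p) by (apply Rmult_le_pos; [apply pos_INR | apply Rlt_le, Rinv_0_lt_compat; lra]).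
  assert (INR i / INR p <= (1 + 1) * INR m).
  { apply (Rmult_le_reg_r (INR p)); auto. unfold Rdiv.
    rewrite Rmult_assoc, Rinv_l by lra. lra. }
  apply Rabs_le; lra.
Qed.

Definition grid (m p : nat) : list (R * R) := list_prod (mesh m p) (mesh m p).

Lemma grid_approx m p x : (0 < p)%nat -> ball m x ->
  exists g, In g (grid m p) /\ boxd x g <= / INR p.
Proof.
  intros Hp Hx. unfold ball in Hx.
  pose proof (boxd_fst (0, 0) x) as H1; pose proof (boxd_snd (0, 0) x) as H2.
  simpl in H1, H2. rewrite Rminus_0_l, Rabs_Ropp in H1, H2.
  destruct (mesh_approx m p (fst x) Hp) as [a [Ha Ha']]; [lra|].
  destruct (mesh_approx m p (snd x) Hp) as [b [Hb Hb']]; [lra|].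
  exists (a, b). split; [now apply in_prod_iff | now apply boxd_lub].
Qed.

Lemma grid_ball m p g : (0 < p)%nat -> In g (grid m p) -> ball m g.
Proof.
  intros Hp Hg. destruct g as [a b]. apply in_prod_iff in Hg as [Ha Hb].
  unfold ball. apply boxd_lub; simpl; rewrite Rminus_0_l, Rabs_Ropp; eapply mesh_bound; eauto.
Qed.

Definition quantize (p : nat) (v : R) : nat := Z.to_nat (up (v * INR p)).

Lemma quantize_eq p v w : (0 < p)%nat -> 0 <= v -> 0 <= w ->
  quantize p v = quantize p w -> Rabs (v - w) < / INR p.
Proof.
  intros Hp Hv Hw H. assert (HP : 0 < INR p) by (apply lt_0_INR; lia).
  destruct (archimed (v * INR p)) as [A1 A2]. destruct (archimed (w * INR p)) as [B1 B2].
  assert (0 <= v * INR p) by (apply Rmult_le_pos; lra).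
  assert (0 <= w * INR p) by (apply Rmult_le_pos; lra).
  assert (0 < up (v * INR p))%Z by (apply lt_IZR; simpl; lra).
  assert (0 < up (w * INR p))%Z by (apply lt_IZR; simpl; lra).
  unfold quantize in H. assert (E : up (v * INR p) = up (w * INR p)) by lia.
  rewrite E in A1, A2.
  assert (Rabs (v * INR p - w * INR p) < 1) by (apply Rabs_def1; lra).
  replace (v - w) with ((v * INR p - w * INR p) * / INR p) by (field; lra).
  rewrite Rabs_mult, (Rabs_right (/ INR p)) by (apply Rle_ge, Rlt_le, Rinv_0_lt_compat; lra).
  rewrite <- (Rmult_1_l (/ INR p)) at 2.
  apply Rmult_lt_compat_r; [apply Rinv_0_lt_compat; lra | auto].
Qed.

Lemma quantize_le p v w : (0 < p)%nat -> v <= w -> (quantize p v <= quantize p w)%nat.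
Proof.
  intros Hp Hvw. assert (HP : 0 < INR p) by (apply lt_0_INR; lia).
  destruct (archimed (v * INR p)) as [A1 A2]. destruct (archimed (w * INR p)) as [B1 B2].
  assert (v * INR p <= w * INR p) by (apply Rmult_le_compat_r; lra).
  assert (up (v * INR p) < up (w * INR p) + 1)%Z by (apply lt_IZR; rewrite plus_IZR; simpl; lra).
  unfold quantize. lia.
Qed.

(* Functions with the same quantized distances on a 1/p-grid of the ball are 3/p-close. *)
Lemma Kset_totally_bounded m r : 0 < r -> exists L, (forall c, In c L -> Kset c) /\
  forall f, Kset f -> exists c, In c L /\ AWdev m c f < r.
Proof.
  intros Hr. destruct (archimed_cor1 (r / 4)) as [p [Hp1 Hp]]; [lra|].
  assert (HP : 0 < INR p) by (apply lt_0_INR; lia).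
  set (code := fun f => map (fun g => quantize p (dset g (epi f))) (grid m p)).
  destruct (finite_representatives Kset code
              (bounded_codes (length (grid m p)) (quantize p (INR m + 1))))
    as [L [HL1 HL2]].
  exists L. split; auto. intros f Hf.
  destruct (HL2 f Hf) as [c [Hc Hcode]].
  { apply in_bounded_codes; [apply length_map|].
    intros j Hj. apply in_map_iff in Hj. destruct Hj as [g [<- Hg]].
    apply quantize_le; auto. eapply Rle_trans; [now apply Kset_dset_le|].
    apply ball_boxd_01. eapply grid_ball; eauto. }
  exists c. split; auto. pose proof (HL1 c Hc) as Kc.
  apply Rle_lt_trans with (3 * / INR p); [|lra].
  apply AWdev_le; try apply Kc; try apply Hf. intros x Hx.
  destruct (grid_approx m p x Hp Hx) as [g [Hg Hxg]].
  assert (Rabs (dset g (epi f) - dset g (epi c)) < / INR p).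
  { apply quantize_eq; auto; try apply dset_ge0; try apply Kset_epi_nonempty; auto.
    symmetry. exact (ext_in_map Hcode g Hg). }
  pose proof (dset_lip_abs _ (Kset_epi_nonempty f Hf) x g).
  pose proof (dset_lip_abs _ (Kset_epi_nonempty c Kc) x g).
  replace (dset x (epi f) - dset x (epi c)) with
    ((dset x (epi f) - dset g (epi f)) + (dset g (epi f) - dset g (epi c))
     + (dset g (epi c) - dset x (epi c))) by ring.
  eapply Rle_trans; [apply Rabs_triang|].
  eapply Rle_trans; [apply Rplus_le_compat_r, Rabs_triang|].
  rewrite (Rabs_minus_sym (dset g (epi c))). lra.
Qed.

(** * Exact zeros from approximate zeros *)

Definition vanishes (r : nat -> R) : Prop :=
  forall d, 0 < d -> exists N, forall n, (N <= n)%nat -> r n < d.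

Section BoxCauchy.

Variables (Y : nat -> R * R) (r : nat -> R).
Hypothesis Y_cauchy : forall n m, (n <= m)%nat -> boxd (Y n) (Y m) <= r n.
Hypothesis r_vanishes : vanishes r.

Lemma coordinate_limit (pr : R * R -> R) :
  (forall a b, Rabs (pr a - pr b) <= boxd a b) ->
  exists l, forall n, Rabs (pr (Y n) - l) <= r n.
Proof.
  intros Hpr.
  assert (Hc : Cauchy_crit (fun n => pr (Y n))).
  { intros d Hd. destruct (r_vanishes d Hd) as [N HN].
    exists N. intros n m Hn Hm. unfold Rdist.
    destruct (Nat.le_ge_cases n m) as [Hnm|Hnm].
    - pose proof (Y_cauchy n m Hnm). pose proof (Hpr (Y n) (Y m)). pose proof (HN n Hn). lra.
    - pose proof (Y_cauchy m n Hnm). pose proof (Hpr (Y m) (Y n)). pose proof (HN m Hm).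
      rewrite Rabs_minus_sym. lra. }
  destruct (R_complete _ Hc) as [l Hl]. exists l. intros j.
  apply (cv_dist_le _ _ _ _ j Hl). intros n Hn.
  eapply Rle_trans; [apply Hpr | auto].
Qed.

Lemma boxd_cauchy_limit : exists y, forall n, boxd (Y n) y <= r n.
Proof.
  destruct (coordinate_limit fst boxd_fst) as [a Ha].
  destruct (coordinate_limit snd boxd_snd) as [b Hb].
  exists (a, b). intros n. now apply boxd_lub.
Qed.

End BoxCauchy.

Lemma boxd_telescope (Y : nat -> R * R) (r : nat -> R) :
  (forall j, boxd (Y j) (Y (S j)) <= r j - r (S j)) ->
  forall n m, (n <= m)%nat -> boxd (Y n) (Y m) <= r n - r m.
Proof.
  intros Hstep n m Hnm. induction Hnm as [|m Hnm IH].
  - rewrite boxd_refl. lra.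
  - pose proof (boxd_triangle (Y n) (Y m) (Y (S m))). pose proof (Hstep m). lra.
Qed.

Definition halving (a : R) (j : nat) : R := a * (/ 2) ^ j.

Lemma halving_pos a j : 0 < a -> 0 < halving a j.
Proof. intros Ha. apply Rmult_lt_0_compat; auto. apply pow_lt. lra. Qed.

Lemma halving_S a j : halving a (S j) = halving a j / 2.
Proof. unfold halving. simpl. field. Qed.

Lemma halving_vanishes a : 0 < a -> vanishes (halving a).
Proof.
  intros Ha d Hd. destruct (pow_lt_1_zero (/ 2)) with (y := d / a) as [N HN].
  - rewrite Rabs_right; lra.
  - now apply Rdiv_lt_0_compat.
  - exists N. intros n Hn. specialize (HN n Hn). unfold halving.
    rewrite Rabs_right in HN by (apply Rle_ge, pow_le; lra).
    apply (Rmult_lt_compat_l a) in HN; auto.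
    replace (a * (d / a)) with d in HN by (field; lra). lra.
Qed.

Section ExactZeros.

Variable ph : R * R -> R.
Hypothesis ph_ge0 : forall x, 0 <= ph x.
Hypothesis ph_lip : forall x y, ph x <= boxd x y + ph y.
Hypothesis ph_approx_zero :
  forall x e, 0 < e -> exists y, ph y <= e /\ boxd x y <= ph x + e.

Definition approx_zero (x : R * R) (e : R) : R * R :=
  epsilon (inhabits (0, 0)) (fun y => ph y <= e /\ boxd x y <= ph x + e).

Lemma approx_zero_spec x e : 0 < e ->
  ph (approx_zero x e) <= e /\ boxd x (approx_zero x e) <= ph x + e.
Proof. intros He. unfold approx_zero. apply epsilon_spec, ph_approx_zero, He. Qed.

Fixpoint descent (x : R * R) (e : nat -> R) (j : nat) : R * R :=
  match j with
  | O => approx_zero x (e O)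
  | S j' => approx_zero (descent x e j') (e j)
  end.

(* With tolerances halving at each step, the descent moves by at most 3/2 of the
   current tolerance, so it is Cauchy with tails bounded by three tolerances. *)
Lemma exact_zero_near x eps : 0 < eps -> exists y, ph y = 0 /\ boxd x y <= ph x + eps.
Proof.
  intros Heps. set (e := halving (eps / 4)). set (Y := descent x e).
  assert (He : forall j, 0 < e j) by (intros; apply halving_pos; lra).
  assert (HY : forall j, ph (Y j) <= e j) by (intros [|j]; apply approx_zero_spec, He).
  assert (Hstep : forall j, boxd (Y j) (Y (S j)) <= 3 * e j - 3 * e (S j)).
  { intros j. change (Y (S j)) with (approx_zero (Y j) (e (S j))).
    pose proof (proj2 (approx_zero_spec (Y j) (e (S j)) (He (S j)))).
    assert (e (S j) = e j / 2) by apply halving_S.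
    pose proof (HY j). pose proof (He j). lra. }
  destruct (boxd_cauchy_limit Y (fun j => 3 * e j)) as [y Hy].
  { intros n m Hnm. pose proof (boxd_telescope Y (fun j => 3 * e j) Hstep n m Hnm).
    pose proof (He m). lra. }
  { intros d Hd. destruct (halving_vanishes (eps / 4) ltac:(lra) (d / 3)) as [N HN]; [lra|].
    exists N. intros n Hn. specialize (HN n Hn). fold e in HN. lra. }
  exists y. split.
  - apply Rle_antisym; [|apply ph_ge0]. apply le_epsilon. intros d Hd.
    destruct (halving_vanishes (eps / 4) ltac:(lra) (d / 4)) as [N HN]; [lra|].
    specialize (HN N (le_n _)). fold e in HN.
    pose proof (ph_lip y (Y N)). rewrite boxd_sym in H. pose proof (Hy N). pose proof (HY N).
    lra.
  - pose proof (boxd_triangle x (Y O) y). pose proof (Hy O).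
    pose proof (proj2 (approx_zero_spec x (e O) (He O))).
    assert (e O = eps / 4) by (unfold e, halving; simpl; ring). unfold Y in *. simpl in *. lra.
Qed.

End ExactZeros.

Definition ERle (E : ERbar) (b : R) : Prop :=
  match E with Fin v => v <= b | PInf => False end.

Lemma ERle_of_closed_upset (Z : R -> Prop) :
  (forall b b', Z b -> b <= b' -> Z b') ->
  (forall b, Z b -> 0 <= b) ->
  (forall b, (forall d, 0 < d -> exists b', Z b' /\ b' < b + d) -> Z b) ->
  exists E, forall b, ERle E b <-> Z b.
Proof.
  intros Hup Hlb Hcl. destruct (classic (exists b, Z b)) as [Hne|Hempty].
  - destruct (glb_exists Z 0 Hne Hlb) as [v Hv]. exists (Fin v). intros b. simpl. split.
    + intros Hvb. apply Hcl. intros d Hd.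
      destruct (glb_approx Z v d Hv Hd) as [b' [Hb' Hlt]]. exists b'. split; auto. lra.
    + intros Hb. now apply Hv.
  - exists PInf. intros b. simpl. split; [tauto|]. intros Hb. apply Hempty. eauto.
Qed.

Section ZeroSet.

Variable ph : R * R -> R.
Hypothesis ph_ge0 : forall x, 0 <= ph x.
Hypothesis ph_lip : forall x y, ph x <= boxd x y + ph y.

Lemma epigraph_of_zero_set :
  (forall t b b', b <= b' -> ph (t, b') <= ph (t, b)) ->
  (forall t b, - b <= ph (t, b)) ->
  exists f, forall p, epi f p <-> ph p = 0.
Proof.
  intros Hmono Hneg.
  assert (Hfib : forall t, exists E, forall b, ERle E b <-> ph (t, b) = 0).
  { intros t. apply ERle_of_closed_upset.
    - intros b b' Hb Hbb'. pose proof (Hmono t b b' Hbb'). pose proof (ph_ge0 (t, b')). lra.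
    - intros b Hb. pose proof (Hneg t b). lra.
    - intros b Hb. apply Rle_antisym; [|apply ph_ge0]. apply le_epsilon. intros d Hd.
      destruct (Hb d Hd) as [b' [Hz Hlt]]. destruct (Rle_dec b' b) as [Hle|Hgt].
      + pose proof (Hmono t b' b Hle). lra.
      + pose proof (ph_lip (t, b) (t, b')).
        assert (boxd (t, b) (t, b') <= d).
        { apply boxd_lub; simpl; [rewrite Rminus_diag, Rabs_R0 | rewrite Rabs_left]; lra. }
        lra. }
  exists (fun t => epsilon (inhabits PInf) (fun E => forall b, ERle E b <-> ph (t, b) = 0)).
  intros [t b]. exact (epsilon_spec _ _ (Hfib t) b).
Qed.

Variable f : R -> ERbar.
Hypothesis epi_zero_set : forall p, epi f p <-> ph p = 0.

Lemma zero_set_lsc : lsc f.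
Proof.
  intros t a Ha. assert (Hpos : 0 < ph (t, a)).
  { destruct (Rle_lt_or_eq_dec _ _ (ph_ge0 (t, a))) as [Hlt|Heq]; auto.
    symmetry in Heq. apply (epi_zero_set (t, a)) in Heq. unfold epi in Heq; simpl in Heq.
    destruct (f t); simpl in *; lra. }
  exists (ph (t, a)). split; auto. intros s Hs.
  destruct (f s) as [v|] eqn:E; simpl; auto. apply Rnot_le_lt. intros Hva.
  assert (Hz : ph (s, a) = 0) by (apply epi_zero_set; unfold epi; simpl; now rewrite E).
  pose proof (ph_lip (t, a) (s, a)).
  assert (boxd (t, a) (s, a) = Rabs (s - t)).
  { unfold boxd; simpl. rewrite Rminus_diag, Rabs_R0, Rabs_minus_sym.
    apply Rmax_left, Rabs_pos. }
  lra.
Qed.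

Lemma zero_set_Kset :
  (forall t b, - b <= ph (t, b)) ->
  (forall p q l, 0 <= l <= 1 -> ph (comb l p q) <= l * ph p + (1 - l) * ph q) ->
  ph (0, 1) = 0 ->
  Kset f.
Proof.
  intros Hneg Hconv H01.
  assert (Hf01 : epi f (0, 1)) by now apply epi_zero_set.
  unfold epi in Hf01; simpl in Hf01.
  destruct (f 0) as [v|] eqn:E; [|contradiction].
  split; [split; [apply zero_set_lsc | split; [| split]] | eauto].
  - intros p q l Hp Hq Hl. apply epi_zero_set. apply epi_zero_set in Hp, Hq.
    pose proof (Hconv p q l Hl). pose proof (ph_ge0 (comb l p q)).
    change (ph (comb l p q) = 0). rewrite Hp, Hq in *. lra.
  - intros t w Ew. assert (Hz : ph (t, w) = 0) by (apply epi_zero_set; unfold epi; simpl; rewrite Ew; lra).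
    pose proof (Hneg t w). lra.
  - congruence.
Qed.

Lemma dset_zero_set :
  (forall x e, 0 < e -> exists y, ph y = 0 /\ boxd x y <= ph x + e) ->
  forall x, dset x (epi f) = ph x.
Proof.
  intros Hzero x.
  assert (Hne : nonempty (epi f)).
  { destruct (Hzero x 1 Rlt_0_1) as [y [Hy _]]. exists y. now apply epi_zero_set. }
  apply Rle_antisym.
  - apply le_epsilon. intros e He. destruct (Hzero x e He) as [y [Hy Hxy]].
    pose proof (dset_le _ Hne x y (proj2 (epi_zero_set y) Hy)). lra.
  - apply (dset_glb _ Hne). intros y Hy%epi_zero_set. pose proof (ph_lip x y). lra.
Qed.

End ZeroSet.

(** * Completeness *)

Section Completeness.

Variables (fs : nat -> R -> ERbar) (r : nat -> R).
Hypothesis fs_Kset : forall n, Kset (fs n).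
Hypothesis r_vanishes : vanishes r.
Hypothesis fs_cauchy : forall m n, (m <= n)%nat -> AWdev m (fs m) (fs n) <= r m.

Let ne n : nonempty (epi (fs n)) := Kset_epi_nonempty (fs n) (fs_Kset n).
Let XMfs n : XM (fs n) := proj1 (fs_Kset n).

Lemma pointwise_close x m n : (m <= n)%nat -> ball m x ->
  Rabs (dset x (epi (fs n)) - dset x (epi (fs m))) <= r m.
Proof.
  intros Hmn Hx. eapply Rle_trans; [apply AWdev_ge; [apply XMfs | apply XMfs | exact Hx] | apply fs_cauchy, Hmn].
Qed.

Lemma pointwise_cauchy x : Cauchy_crit (fun n => dset x (epi (fs n))).
Proof.
  intros d Hd. destruct (ball_eventually x) as [N1 HN1]. destruct (r_vanishes d Hd) as [N2 HN2].
  exists (max N1 N2). intros n m Hn Hm. unfold Rdist.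
  destruct (Nat.le_ge_cases n m) as [Hnm|Hnm].
  - pose proof (pointwise_close x n m Hnm (HN1 n ltac:(lia))). pose proof (HN2 n ltac:(lia)).
    rewrite Rabs_minus_sym. lra.
  - pose proof (pointwise_close x m n Hnm (HN1 m ltac:(lia))). pose proof (HN2 m ltac:(lia)).
    lra.
Qed.

Definition lim_dist (x : R * R) : R :=
  epsilon (inhabits 0) (Un_cv (fun n => dset x (epi (fs n)))).

Lemma lim_dist_cv x : Un_cv (fun n => dset x (epi (fs n))) (lim_dist x).
Proof.
  unfold lim_dist. apply epsilon_spec.
  destruct (R_complete _ (pointwise_cauchy x)) as [l Hl]. eauto.
Qed.

Lemma lim_dist_close m x : ball m x -> Rabs (dset x (epi (fs m)) - lim_dist x) <= r m.
Proof.
  intros Hx. apply (cv_dist_le _ _ _ _ m (lim_dist_cv x)). intros n Hn.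
  rewrite Rabs_minus_sym. now apply pointwise_close.
Qed.

Lemma lim_dist_ge0 x : 0 <= lim_dist x.
Proof.
  apply (@Rle_cv_lim (fun _ => 0) (fun n => dset x (epi (fs n))) _ _
           (fun n => dset_ge0 _ (ne n) x) (cv_const 0) (lim_dist_cv x)).
Qed.

Lemma lim_dist_lip x y : lim_dist x <= boxd x y + lim_dist y.
Proof.
  apply (@Rle_cv_lim (fun n => dset x (epi (fs n))) (fun n => boxd x y + dset y (epi (fs n)))
           _ _ (fun n => dset_lip _ (ne n) x y) (lim_dist_cv x)).
  apply CV_plus; [apply cv_const | apply lim_dist_cv].
Qed.

Lemma lim_dist_mono t b b' : b <= b' -> lim_dist (t, b') <= lim_dist (t, b).
Proof.
  intros Hb.
  apply (@Rle_cv_lim (fun n => dset (t, b') (epi (fs n))) (fun n => dset (t, b) (epi (fs n)))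
           _ _ (fun n => dset_epi_mono _ (ne n) t b b' Hb)); apply lim_dist_cv.
Qed.

Lemma lim_dist_ge_opp t b : - b <= lim_dist (t, b).
Proof.
  apply (@Rle_cv_lim (fun _ => - b) (fun n => dset (t, b) (epi (fs n))) _ _
           (fun n => dset_epi_ge_opp _ (ne n) t b (proj1 (proj2 (proj2 (XMfs n))))));
    [apply cv_const | apply lim_dist_cv].
Qed.

Lemma lim_dist_convex p q l : 0 <= l <= 1 ->
  lim_dist (comb l p q) <= l * lim_dist p + (1 - l) * lim_dist q.
Proof.
  intros Hl.
  apply (@Rle_cv_lim (fun n => dset (comb l p q) (epi (fs n)))
    (fun n => l * dset p (epi (fs n)) + (1 - l) * dset q (epi (fs n)))
    _ _ (fun n => dset_epi_convex _ (ne n) p q l (proj1 (proj2 (XMfs n))) Hl)).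
  - apply lim_dist_cv.
  - apply CV_plus; apply CV_mult; try apply cv_const; apply lim_dist_cv.
Qed.

Lemma lim_dist_01 : lim_dist (0, 1) = 0.
Proof.
  apply (UL_sequence (fun n => dset (0, 1) (epi (fs n)))); [apply lim_dist_cv|].
  intros e He. exists O. intros n _. unfold Rdist.
  rewrite (dset_zero _ (ne n) _ (Kset_epi_01 _ (fs_Kset n))), Rminus_diag, Rabs_R0. lra.
Qed.

(* Near-projections onto epi (fs m), for m large, are near-zeros of lim_dist. *)
Lemma lim_dist_approx_zero x e : 0 < e ->
  exists y, lim_dist y <= e /\ boxd x y <= lim_dist x + e.
Proof.
  intros He.
  destruct (INR_unbounded (boxd (0, 0) x + lim_dist x + e)) as [N1 HN1].
  destruct (r_vanishes (e / 3)) as [N2 HN2]; [lra|].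
  set (m := max N1 N2).
  assert (INR N1 <= INR m) by (apply le_INR; lia).
  pose proof (HN2 m ltac:(lia)). pose proof (lim_dist_ge0 x).
  assert (Hxm : ball m x) by (unfold ball; lra).
  destruct (dset_approx _ (ne m) x (e / 3) ltac:(lra)) as [y [Hy Hxy]].
  pose proof (Rabs_le_bounds _ _ (lim_dist_close m x Hxm)).
  assert (Hym : ball m y) by (unfold ball; pose proof (boxd_triangle (0, 0) x y); lra).
  pose proof (Rabs_le_bounds _ _ (lim_dist_close m y Hym)).
  rewrite (dset_zero _ (ne m) y Hy) in *.
  exists y. split; lra.
Qed.

Lemma Kset_cauchy_limit : exists fl, Kset fl /\ forall m, AWdev m (fs m) fl <= r m.
Proof.
  destruct (epigraph_of_zero_set lim_dist lim_dist_ge0 lim_dist_lip lim_dist_mono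
              lim_dist_ge_opp) as [fl Hfl].
  assert (Kfl : Kset fl)
    by (apply (zero_set_Kset lim_dist lim_dist_ge0 lim_dist_lip fl Hfl lim_dist_ge_opp
                 lim_dist_convex lim_dist_01)).
  pose proof (exact_zero_near lim_dist lim_dist_ge0 lim_dist_lip lim_dist_approx_zero) as Hzero.
  exists fl. split; auto. intros m.
  apply AWdev_le; [apply XMfs | apply Kfl |]. intros x Hx.
  rewrite (dset_zero_set lim_dist lim_dist_lip fl Hfl Hzero x), Rabs_minus_sym.
  now apply lim_dist_close.
Qed.

End Completeness.

(** * Compactness *)

Definition finitely_covered {I : Type} (U : I -> (R -> ERbar) -> Prop)
    (S : (R -> ERbar) -> Prop) : Prop :=
  exists l : list I, forall f, S f -> exists i, In i l /\ U i f.

Lemma finitely_covered_union {I A : Type} (U : I -> (R -> ERbar) -> Prop)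
    (S : A -> (R -> ERbar) -> Prop) (L : list A) :
  (forall a, In a L -> finitely_covered U (S a)) ->
  finitely_covered U (fun f => exists a, In a L /\ S a f).
Proof.
  induction L as [|a L IH]; intros H.
  - exists nil. intros f [a [[] _]].
  - destruct (H a (or_introl eq_refl)) as [l1 Hl1].
    destruct IH as [l2 Hl2]; [intros b Hb; apply H; now right|].
    exists (l1 ++ l2). intros f [b [[<-|Hb] Hf]].
    + destruct (Hl1 f Hf) as [i [Hi Ui]]. exists i. split; auto. apply in_or_app; auto.
    + destruct (Hl2 f (ex_intro _ b (conj Hb Hf))) as [i [Hi Ui]].
      exists i. split; auto. apply in_or_app; auto.
Qed.

Definition radius (m : nat) : R := / (INR m + 1).

Lemma radius_pos m : 0 < radius m.
Proof. apply Rinv_0_lt_compat. pose proof (pos_INR m). lra. Qed.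

Lemma radius_vanishes : vanishes (fun m => 2 * radius m).
Proof.
  intros d Hd. destruct (archimed_cor1 (d / 2)) as [N [HN HN0]]; [lra|].
  exists N. intros m Hm.
  assert (radius m <= / INR N); [|lra].
  apply Rinv_le_contravar; [apply lt_0_INR; lia|]. apply le_INR in Hm. lra.
Qed.

Lemma four_radius_lt k : (1 <= k)%nat -> 4 * radius (4 * k) < 1 / INR k.
Proof.
  intros Hk. apply (le_INR 1) in Hk. simpl in Hk. unfold radius.
  rewrite mult_INR. simpl. replace (1 + 1 + 1 + 1) with 4 by ring.
  apply (Rmult_lt_reg_r (INR k * (4 * INR k + 1))); [nra|].
  field_simplify; lra.
Qed.

Section Covering.

Context {I : Type} (U : I -> (R -> ERbar) -> Prop).

Lemma uncovered_refine m S : (forall f, S f -> Kset f) -> ~ finitely_covered U S ->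
  exists c, Kset c /\ ~ finitely_covered U (fun g => S g /\ AWdev m c g < radius m).
Proof.
  intros HS HnS. destruct (Kset_totally_bounded m (radius m) (radius_pos m)) as [L [HL1 HL2]].
  apply NNPP. intros Hno. apply HnS.
  destruct (finitely_covered_union U (fun c g => S g /\ AWdev m c g < radius m) L) as [l Hl].
  { intros c Hc. apply NNPP. intros Hn. apply Hno. eauto. }
  exists l. intros f Sf. apply Hl.
  destruct (HL2 f (HS f Sf)) as [c [Hc Hd]]. eauto.
Qed.

Definition refine_center (m : nat) (S : (R -> ERbar) -> Prop) : R -> ERbar :=
  epsilon (inhabits (fun _ => PInf))
    (fun c => Kset c /\ ~ finitely_covered U (fun g => S g /\ AWdev m c g < radius m)).

Lemma refine_center_spec m S : (forall f, S f -> Kset f) -> ~ finitely_covered U S ->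
  Kset (refine_center m S) /\
  ~ finitely_covered U (fun g => S g /\ AWdev m (refine_center m S) g < radius m).
Proof. intros HS HnS. unfold refine_center. apply epsilon_spec, uncovered_refine; auto. Qed.

Fixpoint nest (m : nat) : (R -> ERbar) -> Prop :=
  match m with
  | O => Kset
  | S m' => fun g => nest m' g /\ AWdev m' (refine_center m' (nest m')) g < radius m'
  end.

Lemma nest_decreasing m n g : (m <= n)%nat -> nest n g -> nest m g.
Proof. induction 1 as [|n _ IH]; simpl; tauto. Qed.

Hypothesis Kset_uncovered : ~ finitely_covered U Kset.

Lemma nest_uncovered m : (forall f, nest m f -> Kset f) /\ ~ finitely_covered U (nest m).
Proof.
  induction m as [|m [IH1 IH2]]; [split; auto|].
  split; [intros f [Hf _]; auto | apply (refine_center_spec m _ IH1 IH2)].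
Qed.

Lemma nest_Kset m f : nest m f -> Kset f.
Proof. apply nest_uncovered. Qed.

Lemma nest_diameter m g h : nest (S m) g -> nest (S m) h -> AWdev m g h < 2 * radius m.
Proof.
  intros [Hg Hcg] [Hh Hch]. destruct (nest_uncovered m) as [HK Hn].
  pose proof (proj1 (refine_center_spec m _ HK Hn)) as Kc.
  pose proof (AWdev_triangle m g (refine_center m (nest m)) h
                (proj1 (HK g Hg)) (proj1 Kc) (proj1 (HK h Hh))).
  rewrite (AWdev_sym m g (refine_center m (nest m))) in H by (apply HK, Hg || apply Kc).
  lra.
Qed.

End Covering.

Lemma Kset_finitely_covered {I : Type} (U : I -> (R -> ERbar) -> Prop) :
  (forall i, AWopen (U i)) -> (forall f, Kset f -> exists i, U i f) ->
  finitely_covered U Kset.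
Proof.
  intros Hopen Hcover. apply NNPP. intros Hunc.
  set (fs := fun m => epsilon (inhabits (fun _ => PInf)) (nest U (S m))).
  assert (Hfs : forall m, nest U (S m) (fs m)).
  { intros m. apply epsilon_spec, NNPP. intros Hempty.
    apply (proj2 (nest_uncovered U Hunc (S m))). exists nil. intros f Hf. exfalso. eauto. }
  assert (Kfs : forall m, Kset (fs m)) by (intros m; exact (nest_Kset U Hunc _ _ (Hfs m))).
  destruct (Kset_cauchy_limit fs (fun m => 2 * radius m) Kfs radius_vanishes) as [fl [Kfl Hfl]].
  { intros m n Hmn. apply Rlt_le, (nest_diameter U Hunc); auto.
    apply (nest_decreasing U (S m) (S n)); auto. lia. }
  destruct (Hcover fl Kfl) as [i Ui].
  destruct (Hopen i fl (proj1 Kfl) Ui) as [k [Hk1 Hk]].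
  set (m := (4 * k)%nat).
  apply (proj2 (nest_uncovered U Hunc (S m))). exists (i :: nil). intros g Hg.
  exists i. split; [now left|].
  pose proof (nest_Kset U Hunc _ _ Hg) as Kg. apply Hk; [apply Kg|]. unfold Vk.
  pose proof (AWdev_mono k m fl g (proj1 Kfl) (proj1 Kg) ltac:(lia)).
  pose proof (AWdev_triangle m fl (fs m) g (proj1 Kfl) (proj1 (Kfs m)) (proj1 Kg)).
  rewrite (AWdev_sym m fl (fs m)) in * by (apply Kfl || apply Kfs).
  pose proof (Hfl m). pose proof (nest_diameter U Hunc m _ _ (Hfs m) Hg).
  assert (4 * radius m < 1 / INR k) by now apply four_radius_lt. lra.
Qed.

Theorem mainTheorem8 : AWcompact Kset.
Proof.
  split; [intros f Hf; apply Hf|].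
  intros I U Hopen Hcover. now apply Kset_finitely_covered.
Qed.
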